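(* Let $m,k$ be natural numbers. If the leading term in the hereditary representation in base $k+1$ of the $k$-th term $G(k,m)$ of the Goodstein sequence $G(m)$ is of the form $a_l\cdot(k+1)^{l}$ with $1<a_l<k+1$, then $G(k+1,m)>G(k,m)$ if $l\ge 1$, and $G(k+1,m)<G(k,m)$ if $l=0$.
   Context: For a natural number base $b>1$, the hereditary representation $m\langle b\rangle$ of $m$ is $\sum_{i=0}^{l} a_i b^{i}$ with $0\le a_i<b$, $a_l\ne0$, each exponent itself written in hereditary representation in base $b$, recursively; its leading term is $a_l b^{l}$. $m\langle b\rangle''$ is obtained by syntactically replacing every $b$ by $b+1$ in $m\langle b\rangle$. The Goodstein sequence $G(m)=\{m, m''-1, (m''-1)''-1,\dots\}$ starts from $m$ in base $2$; its $n$-th term is $G(n,m)$, with $G(1,m)=m$ in base $2$, $G(k,m)$ written in base $k+1$, and $G(k+1,m)=G(k,m)\langle k+1\rangle''-1$. *)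

From mathcomp Require Import all_boot.
Set Implicit Arguments. Unset Strict Implicit. Unset Printing Implicit Defensive.

Definition digit (b n i : nat) : nat := (n %/ b ^ i) %% b.

(* Hereditary base change m<b>'' : write n in hereditary base b and replace
   every b by b+1.  n = \sum_i digit b n i * b^i, and each exponent i is itself
   rewritten hereditarily.  Digits with index i >= n vanish (b >= 2), so summing
   over i < n is the full expansion.  [fuel] only ensures structural recursion;
   fuel n.+1 is always sufficient. *)
Fixpoint bump_aux (fuel b n : nat) : nat :=
  match fuel with
  | 0 => 0
  | f.+1 => \sum_(0 <= i < n) digit b n i * b.+1 ^ (bump_aux f b i)
  end.

Definition bump (b n : nat) : nat := bump_aux n.+1 b n.

(* gs m j = G(j+1, m) *)
Fixpoint gs (m j : nat) : nat :=
  match j with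
  | 0 => m
  | j'.+1 => bump j'.+2 (gs m j') - 1
  end.

(* Goodstein sequence term G(k, m), for k >= 1: G(1,m) = m and
   G(k+1,m) = G(k,m)<k+1>'' - 1 (the value at k = 0 is junk). *)
Definition G (k m : nat) : nat := gs m k.-1.

Definition lead_exp (b n : nat) : nat := trunc_log b n.
Definition lead_digit (b n : nat) : nat := n %/ b ^ lead_exp b n.

From mathcomp Require Import all_boot zify.
(* Imported after [all_boot], so that [bump] is the base change rather than
   fintype's [bump]. *)

Set Implicit Arguments.
Unset Strict Implicit.
Unset Printing Implicit Defensive.

(* Base bumping never lowers a term [d * b^i] of the base-[b] expansion, since
   hereditarily rewriting the exponent can only raise it.  If [n] has a single
   digit, [n] is its own expansion and is left unchanged, so subtracting 1
   decreases it.  Otherwise its leading term [a * b^l] with [l >= 1] becomes at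
   least [a * (b+1)^l >= a * (b^l + 1)], a gain of at least [a >= 2], which
   survives the subtraction of 1. *)

Section HereditaryBaseChange.

Variable b : nat.
Hypothesis b_gt1 : 1 < b.

Lemma digit_expansion N n : n < b ^ N ->
  n = \sum_(0 <= i < N) digit b n i * b ^ i.
Proof.
elim: N n => [|N IH] n n_lt.
  by move: n_lt; rewrite big_nil expn0 ltnS leqn0 => /eqP.
rewrite big_nat_recl // /digit expn0 divn1 muln1.
have -> : \sum_(0 <= i < N) n %/ b ^ i.+1 %% b * b ^ i.+1
        = b * \sum_(0 <= i < N) digit b (n %/ b) i * b ^ i.
  rewrite big_distrr; apply: eq_bigr => i _.
  by rewrite /digit expnS divnMA mulnCA.
rewrite -IH; first by rewrite mulnC addnC -divn_eq.
by rewrite ltn_divLR ?(ltnW b_gt1) // -expnSr.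
Qed.

Lemma leq_expn_bump i e : i <= e -> b ^ i <= b.+1 ^ e.
Proof.
move=> le_ie; apply: (@leq_trans (b.+1 ^ i)); last exact: leq_pexp2l.
by case: i {le_ie} => [|i] //; rewrite leq_exp2r.
Qed.

Lemma leq_bump_aux f n : n < f -> n <= bump_aux f b n.
Proof.
elim: f n => [|f IH] n // n_lt_f /=.
rewrite {1}(digit_expansion (ltn_expl n b_gt1)) big_nat_cond [X in _ <= X]big_nat_cond.
apply: leq_sum => i /andP[/andP[_ lt_in] _].
by rewrite leq_mul2l leq_expn_bump ?orbT // IH // (leq_trans lt_in).
Qed.

Lemma bumpE n : bump b n = \sum_(0 <= i < n) digit b n i * b.+1 ^ bump_aux n b i.
Proof. by []. Qed.

Lemma bump_small n : n < b -> bump b n = n.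
Proof.
case: n => [|n] n_lt_b; first by rewrite bumpE big_nil.
rewrite bumpE big_nat_recl // big1 => [|i _]; last first.
  by rewrite /digit divn_small ?mod0n // (leq_trans n_lt_b) // -{1}(expn1 b) leq_exp2l.
by rewrite /digit expn0 divn1 modn_small // [bump_aux _ _ 0]/= big_nil muln1 addn0.
Qed.

Lemma bump_lead_gain n : 0 < trunc_log b n ->
  1 < n %/ b ^ trunc_log b n -> n.+2 <= bump b n.
Proof.
set l := trunc_log b n; set a := n %/ b ^ l => l_gt0 a_gt1.
have n_gt0 : 0 < n by move: l_gt0; rewrite trunc_log_gt0; lia.
have l_lt_n : l < n by apply: leq_trans (ltn_expl l b_gt1) (trunc_logP b_gt1 n_gt0).
have digit_l : digit b n l = a.
  by rewrite /digit modn_small // ltn_divLR ?expn_gt0 ?(ltnW b_gt1) // -expnS trunc_log_ltn.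
have lead_gain : a * b ^ l + 2 <= a * b.+1 ^ bump_aux n b l.
  apply: (@leq_trans (a * b.+1 ^ l)); last by rewrite leq_mul2l leq_pexp2l ?orbT // leq_bump_aux.
  apply: (@leq_trans (a * (b ^ l).+1)); first by rewrite mulnS; lia.
  by rewrite leq_mul2l ltn_exp2r // ltnSn orbT.
have l_in : l \in index_iota 0 n by rewrite mem_index_iota.
rewrite bumpE {1}(digit_expansion (ltn_expl n b_gt1)).
rewrite !(bigD1_seq l l_in (iota_uniq _ _)) /= digit_l -addn2 addnAC leq_add //.
rewrite big_seq_cond [X in _ <= X]big_seq_cond; apply: leq_sum => i.
rewrite mem_index_iota => /andP[/andP[_ lt_in] _].
by rewrite leq_mul2l leq_expn_bump ?orbT // leq_bump_aux.
Qed.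

End HereditaryBaseChange.

Lemma G_succ k m : 0 < k -> G k.+1 m = bump k.+1 (G k m) - 1.
Proof. by case: k. Qed.

(* The hypothesis [a < k+1] is automatic: a leading digit is below the base. *)
Theorem lemma3 (m k : nat) : 1 <= k ->
  forall l a : nat,
    0 < G k m ->
    l = lead_exp k.+1 (G k m) ->
    a = lead_digit k.+1 (G k m) ->
    1 < a < k.+1 ->
    (1 <= l -> G k.+1 m > G k m) /\ (l = 0 -> G k.+1 m < G k m).
Proof.
move=> k_gt0 l a G_gt0 -> -> /andP[a_gt1 _].
have base_gt1 : 1 < k.+1 by [].
rewrite G_succ // /lead_digit /lead_exp in a_gt1 *; split=> l_eq.
- by have := bump_lead_gain base_gt1 l_eq a_gt1; lia.
- have G_lt_base : G k m < k.+1 by move/eqP: l_eq; rewrite trunc_log_eq0; lia.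
  by rewrite bump_small //; lia.
Qed.
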